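(* Consider $\Sigma:\ \dot x=-(A-M)x+d$ and assume $-(A-M)$ is Hurwitz. If $\Sigma$ is $\gamma$-robust for some $\gamma>0$, then for every cycle in the graph $\mathcal{G}(MA^{-1})$, its weight $w$ satisfies $w<1$ and $$\frac{1}{1-w}\le a_i\gamma$$ for every node $i$ belonging to the cycle.
   Context: Fix $N\in\mathbb{N}$. $A=\mathrm{diag}(a_1,\dots,a_N)$ with all $a_i>0$, and $M\in\mathbb{R}^{N\times N}$ has zero diagonal and nonnegative off-diagonal entries $m_{ij}=(M)_{ij}$. For $\gamma>0$, $\Sigma$ is called $\gamma$-robust if $-(A-M)$ is Hurwitz and for every bounded disturbance $d$, the solution with $x(0)=0$ satisfies $\max_{i}|x_i(t)|\le\gamma\max_i\sup_{s\ge0}|d_i(s)|$ for all $t\ge0$. The directed weighted graph $\mathcal{G}(MA^{-1})$ has vertex set $\{1,\dots,N\}$ and an edge $(p,q)$ iff $m_{pq}>0$, with weight $m_{pq}/a_q$. A walk of length $k\ge1$ from $i$ to $j$ is a sequence $(i_0,\dots,i_k)$ with $i_0=i$, $i_k=j$ and $m_{i_{l+1}i_l}>0$ for all $l$; its weight is $\prod_{l=0}^{k-1} m_{i_{l+1}i_l}/a_{i_l}$. A cycle is a walk $(i_0,\dots,i_k)$, $k\ge1$, with $i_0=i_k$ and $i_0,\dots,i_{k-1}$ pairwise distinct; its nodes are $i_0,\dots,i_{k-1}$. *)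

From HB Require Import structures.
From mathcomp Require Import all_boot all_order all_algebra.
From mathcomp Require Import all_classical all_reals all_analysis.
From mathcomp.real_closed Require Import complex.
Set Implicit Arguments. Unset Strict Implicit. Unset Printing Implicit Defensive.
Import Order.TTheory GRing.Theory Num.Theory.
Import numFieldNormedType.Exports.
Local Open Scope classical_set_scope.
Local Open Scope ring_scope.


Section Defs.
Variables (R : realType) (N : nat).

Definition Amat (a : 'I_N -> R) : 'M[R]_N := diag_mx (\row_i a i).

Definition sysmat (a : 'I_N -> R) (M : 'M[R]_N) : 'M[R]_N := - (Amat a - M).

Definition hurwitz (B : 'M[R]_N) : Prop :=
  forall z : R[i], eigenvalue (map_mx (fun r : R => (r%:C)%C) B) z -> Re z < 0.

(* x : [0,oo) -> R^N (component x t i) is the solution of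
   x' = -(A - M) x + d with x(0) = 0: continuous on [0,oo),
   differentiable with the prescribed derivative at every t > 0. *)
Definition is_solution (a : 'I_N -> R) (M : 'M[R]_N)
    (d : R -> 'I_N -> R) (x : R -> 'I_N -> R) : Prop :=
  (forall i, x 0 i = 0) /\
  (forall i, {within `[0, +oo[, continuous (fun s => x s i)}) /\
  (forall t : R, 0 < t -> forall i : 'I_N,
     is_derive t (1 : R) (fun s : R => x s i)
       (\sum_j sysmat a M i j * x t j + d t i)).

Definition disturbance (d : R -> 'I_N -> R) : Prop :=
  forall i, {within `[0, +oo[, continuous (fun s => d s i)}.

(* K bounds max_i sup_{s >= 0} |d_i(s)| *)
Definition dist_bound (d : R -> 'I_N -> R) (K : R) : Prop :=
  forall i s, 0 <= s -> `|d s i| <= K.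

Definition gamma_robust (a : 'I_N -> R) (M : 'M[R]_N) (gamma : R) : Prop :=
  hurwitz (sysmat a M) /\
  forall d x, disturbance d -> (exists K, dist_bound d K) ->
    is_solution a M d x ->
    forall K, dist_bound d K ->
    forall t, 0 <= t -> forall i, `|x t i| <= gamma * K.

Definition walk_rel (M : 'M[R]_N) : rel 'I_N := fun p q => 0 < M q p.

(* a cycle (i_0, ..., i_{k-1}, i_0), k >= 1, nodes pairwise distinct,
   represented by the list of its nodes [:: i_0; ...; i_{k-1}] *)
Definition is_cycle (M : 'M[R]_N) (c : seq 'I_N) : bool :=
  [&& c != [::], uniq c & path.cycle (walk_rel M) c].

(* weight: prod_l m_{i_{l+1} i_l} / a_{i_l}, indices mod k *)
Definition cycle_weight (a : 'I_N -> R) (M : 'M[R]_N) (c : seq 'I_N) : R :=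
  \prod_(pq <- zip c (rot 1 c)) (M pq.2 pq.1 / a pq.1).

End Defs.

From HB Require Import structures.
From mathcomp Require Import all_boot all_order all_algebra.
From mathcomp Require Import all_classical all_reals all_analysis.
From mathcomp.real_closed Require Import complex.
From mathcomp Require Import ring lra.
Import Order.TTheory GRing.Theory Num.Theory.
Import numFieldNormedType.Exports.
Local Open Scope classical_set_scope.
Local Open Scope ring_scope.

(* Write  L_mu = mu I + A - M  ([resolvent_op a M mu]), so that the system
   matrix is -L_0.  The proof combines three independent facts.
   1. Static bound [robust_static_bound]: feeding the system the input that
      makes  x(s) = s/(T+s) v  a solution, whose size is at most
      |v|_1 / T + |L_0 v|_oo, and letting T grow shows that gamma-robustness
      gives  |v_i| <= gamma |L_0 v|_oo  for every vector v.
   2. Nonnegative inverse [exists_pos_supersolution]: as -(A - M) is Hurwitz,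
      L_mu is invertible for all mu >= 0; an infimum argument over the mu
      admitting a positive supersolution v > 0, L_mu v > 0 shows that mu = 0
      admits one, and by the minimum principle [resolvent_min_principle]
      L_0 x >= 0 then implies x >= 0.
   3. Cycle inequality [cycle_supersolution]: if y >= 0 satisfies
      y_p >= m_pr / a_r y_r everywhere, with an extra +1 at node i, then
      chaining these inequalities around any cycle through i gives
      1 + w y_i <= y_i, w the cycle weight.
   For y = A L_0^{-1} e_i [impulse_response], 2 gives y >= 0 and the
   inequalities of 3, while 1 gives y_i <= a_i gamma; elementary algebra
   [geometric_bound] turns  1 + w y_i <= y_i <= a_i gamma  into the claim. *)

(* A quantity e with  T^2 e <= alpha + beta T  for all large T is <= 0; this
   is how the limit T -> oo is taken in the static bound. *)
Lemma quadratic_domination_le0 (R : realFieldType) (e alpha beta : R) :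
  0 <= alpha -> 0 <= beta ->
  (forall T, 1 <= T -> T * T * e <= alpha + beta * T) -> e <= 0.
Proof.
move=> ha hb hT; rewrite leNgt; apply/negP => he.
pose T := (alpha + beta) / e + 1.
have T1 : 1 <= T by rewrite /T lerDr divr_ge0 ?addr_ge0 // ltW.
have Te : T * e = alpha + beta + e.
  by rewrite /T mulrDl mulfVK ?mul1r ?gt_eqF.
have := hT T T1; rewrite -mulrA Te; nra.
Qed.

Lemma geometric_bound {R : realFieldType} {w Y B : R} :
  0 <= Y -> 1 + w * Y <= Y -> Y <= B -> w < 1 /\ (1 - w)^-1 <= B.
Proof.
move=> Y0 hY YB; have w1 : w < 1 by nra.
split=> //; rewrite -[(1 - w)^-1]mul1r ler_pdivrMr; nra.
Qed.

(* The ramp  s |-> s / (T + s)  rises from 0 to 1 with slope at most 1/T;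
   it is the time profile of the test trajectories used in the static bound. *)
Section Ramp.
Variables (R : realType) (T : R).

Definition ramp (s : R) : R := s / (T + s).
Definition ramp' (s : R) : R := T / ((T + s) * (T + s)).

Lemma ramp_derive (s : R) : 0 < T -> 0 <= s -> is_derive s 1 ramp (ramp' s).
Proof.
move=> T0 s0; have Ts : T + s != 0 by rewrite gt_eqF //; lra.
have hTs : is_derive s (1 : R) (fun y : R => T + y) 1.
  by have := @is_deriveD R R R (cst T) id s 1 0 1 _ _; rewrite add0r; apply.
apply: (is_derive_eq (is_deriveM (is_derive_id s 1) (is_deriveV Ts hTs))).
by rewrite /ramp' /GRing.scale /=; field.
Qed.

Lemma ramp'_derivable (s : R) : 0 < T -> 0 <= s -> derivable ramp' s 1.
Proof.
move=> T0 s0; have Ts : T + s != 0 by rewrite gt_eqF //; lra.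
have hTs : derivable (fun y : R => T + y) s 1.
  by apply: derivableD; [exact: derivable_cst | exact: derivable_id].
apply: derivableM; first exact: derivable_cst.
by apply: derivableV; [rewrite mulf_neq0 | apply: derivableM].
Qed.

Lemma ramp_bounds (s : R) : 0 < T -> 0 <= s ->
  0 <= ramp s <= 1 /\ 0 <= ramp' s <= T^-1.
Proof.
move=> T0 s0; have Ts : 0 < T + s by lra.
rewrite /ramp /ramp' !divr_ge0 ?mulr_ge0 ?(ltW T0) ?(ltW Ts) //=.
rewrite ler_pdivrMr // mul1r lerDr (ltW T0); split=> //.
rewrite ler_pdivrMr ?mulr_gt0 // mulrC ler_pdivlMr //; nra.
Qed.

End Ramp.
Arguments ramp {R}.
Arguments ramp' {R}.
Arguments ramp_derive {R T s}.
Arguments ramp'_derivable {R T s}.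
Arguments ramp_bounds {R T s}.

Lemma derivable_within_halfline (R : realType) (f : R -> R) :
  (forall s, 0 <= s -> derivable f s 1) ->
  {within `[0, +oo[%classic, continuous f}.
Proof.
move=> df; apply: derivable_within_continuous => s.
by rewrite in_itv /= andbT; exact: df.
Qed.

(* The trajectory  x(s) = ramp T s * v  solves the system for the input
   d(s) = ramp' T s * v + ramp T s * L_0 v,  which is continuous and bounded
   by  |v|_1 / T + |L_0 v|_oo. *)
Section StaticBound.
Variables (R : realType) (N : nat) (a : 'I_N -> R) (M : 'M[R]_N).
Variables (v : 'I_N -> R) (T : R).

Definition ramp_state (s : R) (j : 'I_N) : R := ramp T s * v j.

Definition ramp_input (s : R) (j : 'I_N) : R :=
  ramp' T s * v j - ramp T s * \sum_q sysmat a M j q * v q.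

Lemma ramp_is_solution : 0 < T -> is_solution a M ramp_input ramp_state.
Proof.
move=> T0; split; first by move=> j; rewrite /ramp_state /ramp !mul0r.
split=> [j|t t0 j].
  apply: derivable_within_halfline => s s0; apply: derivableM.
    by have [] := ramp_derive T0 s0.
  exact: derivable_cst.
apply: (is_derive_eq (is_deriveM (ramp_derive T0 (ltW t0)) (is_derive_cst (v j) t 1))).
rewrite /ramp_input /ramp_state.
under eq_bigr do rewrite mulrCA.
by rewrite -mulr_sumr /GRing.scale /= mulr0 add0r addrC subrK mulrC.
Qed.

Lemma ramp_input_continuous : 0 < T -> disturbance ramp_input.
Proof.
move=> T0 j; apply: derivable_within_halfline => s s0.
apply: derivableB; apply: derivableM.
- exact: ramp'_derivable.
- exact: derivable_cst.
- by have [] := ramp_derive T0 s0.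
- exact: derivable_cst.
Qed.

Lemma ramp_input_bound (U : R) :
  0 < T -> (forall j, `|\sum_q sysmat a M j q * v q| <= U) ->
  dist_bound ramp_input (T^-1 * \sum_j `|v j| + U).
Proof.
move=> T0 hU j s s0; rewrite /ramp_input.
have [/andP[r0 r1] /andP[r'0 r'1]] := ramp_bounds T0 s0.
have vj : `|v j| <= \sum_k `|v k|.
  by rewrite (bigD1 j) //= lerDl sumr_ge0.
have U0 : 0 <= U := le_trans (normr_ge0 _) (hU j).
apply: (le_trans (ler_normB _ _)).
rewrite (normrM (ramp' T s)) (normrM (ramp T s)) (ger0_norm r'0) (ger0_norm r0).
apply: lerD.
  apply: (le_trans (ler_wpM2l r'0 vj)).
  by apply: ler_wpM2r; rewrite ?sumr_ge0.
by apply: (le_trans (ler_wpM2l r0 (hU j))); rewrite ler_piMl.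
Qed.

End StaticBound.
Arguments ramp_state {R N}.
Arguments ramp_input {R N}.
Arguments ramp_is_solution {R N a M v T}.
Arguments ramp_input_continuous {R N a M v T}.
Arguments ramp_input_bound {R N a M v T U}.

Lemma robust_static_bound (R : realType) (N : nat) (a : 'I_N -> R)
    (M : 'M[R]_N) (gamma : R) (v : 'I_N -> R) (U : R) :
  gamma_robust a M gamma -> 0 <= gamma ->
  (forall j, `|\sum_q sysmat a M j q * v q| <= U) ->
  forall i, `|v i| <= gamma * U.
Proof.
move=> [_ robust] g0 hU i.
set V := \sum_j `|v j|.
have V0 : 0 <= V by rewrite sumr_ge0.
have U0 : 0 <= U := le_trans (normr_ge0 _) (hU i).
(* Robustness applied to the ramp at time T^2 bounds  T / (1 + T) |v_i|. *)
have ramp_response T : 0 < T ->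
    `|ramp T (T * T) * v i| <= gamma * (T^-1 * V + U).
  move=> T0; have bound := ramp_input_bound T0 hU.
  apply: (robust (ramp_input a M v T) (ramp_state v T)) => //.
  - exact: ramp_input_continuous.
  - by eexists; exact: bound.
  - exact: ramp_is_solution.
  - by rewrite mulr_ge0 // ltW.
have gV : 0 <= gamma * V by rewrite mulr_ge0.
have gU : 0 <= gamma * U by rewrite mulr_ge0.
rewrite -subr_le0.
apply: (@quadratic_domination_le0 R _ _ _ gV (addr_ge0 gV gU)) => T T1.
have T0 : 0 < T by lra.
have := ramp_response T T0; rewrite normrM /ramp ger0_norm; last first.
  by apply: divr_ge0; nra.
rewrite mulrAC ler_pdivrMr; last nra.
have -> : gamma * (T^-1 * V + U) * (T + T * T) =
          gamma * V * (1 + T) + gamma * U * (T + T * T).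
  by field; rewrite gt_eqF.
nra.
Qed.

(* A Hurwitz matrix has no eigenvalue mu >= 0, so  mu I - B  is invertible. *)
Lemma hurwitz_shift_unitmx {R : realType} {N : nat} {B : 'M[R]_N} {mu : R} :
  hurwitz B -> 0 <= mu -> mu%:M - B \in unitmx.
Proof.
move=> hB mu0; apply/negPn/negP => singular.
have ev : eigenvalue (map_mx (fun r : R => (r%:C)%C) B) (mu%:C)%C.
  rewrite /eigenvalue /eigenspace kermx_eq0 row_free_unit.
  change (map_mx (fun r : R => (r%:C)%C) B) with (map_mx (real_complex R) B).
  rewrite -(map_scalar_mx (real_complex R)) -map_mxB map_unitmx.
  by rewrite -opprB -scaleN1r unitmxZ ?unitrN1.
have := hB _ ev; have mu_real : (mu%:C)%C \is Num.real.
  by rewrite -complexr0 complex_real.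
by rewrite (Creal_ReP _ mu_real) ltcE /= ltNge mu0 andbF.
Qed.

Lemma unitmx_solve {R : fieldType} {N : nat} {G : 'M[R]_N} (y : 'I_N -> R) :
  G \in unitmx -> exists x : 'I_N -> R, forall p, \sum_q G p q * x q = y p.
Proof.
move=> Gu; exists (fun q => (invmx G *m \col_r y r) q 0) => p.
have := congr1 (fun A : 'M[R]_(N, 1) => A p 0) (mulKVmx Gu (\col_r y r)).
by rewrite !mxE => <-; apply: eq_bigr => q _; rewrite !mxE.
Qed.

Section Resolvent.
Variables (R : realType) (N : nat) (a : 'I_N -> R) (M : 'M[R]_N).

Definition resolvent_op (mu : R) (y : 'I_N -> R) (p : 'I_N) : R :=
  (mu + a p) * y p - \sum_q M p q * y q.

Lemma resolvent_opE (mu : R) (y : 'I_N -> R) (p : 'I_N) :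
  \sum_q (mu%:M - sysmat a M) p q * y q = resolvent_op mu y p.
Proof.
have diag : (mu + a p) * y p = \sum_q (mu + a p) *+ (p == q) * y q.
  rewrite (bigD1 p) //= eqxx mulr1n big1 ?addr0 // => q qp.
  by rewrite eq_sym (negbTE qp) mulr0n mul0r.
rewrite /resolvent_op diag -sumrB; apply: eq_bigr => q _.
rewrite /sysmat /Amat !mxE; case: eqVneq => [<-|_] /=; ring.
Qed.

Hypothesis M_ge0 : forall p q, 0 <= M p q.

(* Minimum principle: in the presence of a positive supersolution v of L_mu,
   L_mu x >= 0 forces x >= 0 (look at the minimum of x_q / v_q). *)
Lemma resolvent_min_principle (mu : R) (v x : 'I_N -> R) :
  (forall p, 0 < v p) -> (forall p, 0 < resolvent_op mu v p) ->
  (forall p, 0 <= resolvent_op mu x p) -> forall p, 0 <= x p.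
Proof.
move=> v0 Lv0 Lx0 p; rewrite leNgt; apply/negP => xp0.
have [k _ kmin] := @arg_minP _ _ _ p xpredT (fun q => x q / v q) isT.
set t := x k / v k in kmin.
have t0 : t < 0 by apply: le_lt_trans (kmin p isT) _; rewrite pmulr_llt0 ?invr_gt0.
pose z q := x q - t * v q.
have z0 q : 0 <= z q.
  by have := kmin q isT; rewrite ler_pdivlMr // /z subr_ge0.
have zk : z k = 0 by rewrite /z /t mulfVK ?subrr // gt_eqF.
have Lz : resolvent_op mu z k = resolvent_op mu x k - t * resolvent_op mu v k.
  rewrite /resolvent_op /z.
  have -> : \sum_q M k q * (x q - t * v q) =
            \sum_q M k q * x q - t * \sum_q M k q * v q.
    by rewrite mulr_sumr -sumrB; apply: eq_bigr => q _; ring.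
  ring.
have : resolvent_op mu z k <= 0.
  by rewrite /resolvent_op zk mulr0 sub0r oppr_le0 sumr_ge0 // => q _; rewrite mulr_ge0.
by rewrite Lz; have := Lx0 k; have := Lv0 k; nra.
Qed.

Hypothesis a_gt0 : forall p, 0 < a p.

Definition pos_supersolution (mu : R) : Prop :=
  exists v : 'I_N -> R, (forall p, 0 < v p) /\ (forall p, 0 < resolvent_op mu v p).

(* For mu at least every row sum of M, the constant vector 1 works. *)
Lemma pos_supersolution_large : pos_supersolution (\sum_p \sum_q M p q).
Proof.
exists (fun _ => 1 : R); split=> // p; rewrite /resolvent_op mulr1.
have -> : \sum_q M p q * 1 = \sum_q M p q by apply: eq_bigr => q _; rewrite mulr1.
have : \sum_q M p q <= \sum_p \sum_q M p q.
  by rewrite [X in _ <= X](bigD1 p) //= lerDl sumr_ge0 // => r _; rewrite sumr_ge0.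
by have := a_gt0 p; lra.
Qed.

(* If L_m v = 1 and a positive supersolution exists at a level mu slightly
   above m, then L_mu v >= 0, so v >= 0 and hence v > 0. *)
Lemma resolvent_solution_pos (m mu : R) (v : 'I_N -> R) :
  0 <= m -> (forall p, resolvent_op m v p = 1) ->
  pos_supersolution mu -> m <= mu <= m + (1 + \sum_q `|v q|)^-1 ->
  forall p, 0 < v p.
Proof.
move=> m0 Lv [w [w0 Lw0]] /andP[m_mu mu_m].
have v0 : forall p, 0 <= v p.
  apply: (@resolvent_min_principle mu w v w0 Lw0) => p.
  have -> : resolvent_op mu v p = 1 + (mu - m) * v p.
    by rewrite -(Lv p) /resolvent_op; ring.
  have B0 : 0 < 1 + \sum_q `|v q| by rewrite ltr_pwDl // sumr_ge0.
  have vp : `|v p| <= 1 + \sum_q `|v q|.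
    by rewrite (bigD1 p) //= addrCA lerDl addr_ge0 // sumr_ge0.
  have : (mu - m) * `|v p| <= 1.
    apply: le_trans (_ : (1 + \sum_q `|v q|)^-1 * `|v p| <= 1).
      by apply: ler_wpM2r => //; lra.
    by rewrite mulrC ler_pdivrMr // mul1r.
  by have := ler_norm (- v p); rewrite normrN; nra.
move=> p; have := Lv p; rewrite /resolvent_op.
have : 0 <= \sum_q M p q * v q by rewrite sumr_ge0 // => q _; rewrite mulr_ge0.
by have := a_gt0 p; have := v0 p; nra.
Qed.

Lemma pos_supersolution_shift (m : R) (v : 'I_N -> R) :
  0 < m -> (forall p, 0 < v p) -> (forall p, resolvent_op m v p = 1) ->
  exists2 mu, 0 <= mu < m & pos_supersolution mu.
Proof.
move=> m0 v0 Lv; set V := \sum_q v q.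
have V0 : 0 <= V by rewrite sumr_ge0 // => q _; rewrite ltW.
have mV : 0 < 1 + m * V by rewrite ltr_pwDl // mulr_ge0 // ltW.
set d := m / (1 + m * V).
have dmV : d * (1 + m * V) = m by rewrite mulfVK // gt_eqF.
exists (m - d); first by apply/andP; split; nra.
exists v; split=> // p.
have vV : v p <= V by rewrite /V (bigD1 p) //= lerDl sumr_ge0 // => q _; rewrite ltW.
have -> : resolvent_op (m - d) v p = 1 - d * v p by rewrite -(Lv p) /resolvent_op; ring.
by have := v0 p; nra.
Qed.

(* If L_mu is invertible for all mu >= 0, then L_0 has a positive
   supersolution: the infimum of the levels admitting one is attained
   (resolvent_solution_pos) and cannot be positive (pos_supersolution_shift). *)
Theorem exists_pos_supersolution :
  (forall mu, 0 <= mu -> forall y, exists x, forall p, resolvent_op mu x p = y p) ->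
  pos_supersolution 0.
Proof.
move=> solvable.
pose S := [set mu | 0 <= mu /\ pos_supersolution mu].
have S_inf : has_inf S.
  split; last by exists 0 => mu [].
  exists (\sum_p \sum_q M p q); split; last exact: pos_supersolution_large.
  by apply: sumr_ge0 => p _; exact: sumr_ge0.
have m0 : 0 <= inf S by apply: lb_le_inf; [case: S_inf | move=> mu []].
have [v Lv] := solvable _ m0 (fun _ => 1).
have B0 : 0 < (1 + \sum_q `|v q|)^-1 by rewrite invr_gt0 ltr_pwDl // sumr_ge0.
have [mu [mu0 mu_super] mu_m] := inf_adherent B0 S_inf.
have v0 : forall p, 0 < v p.
  apply: (@resolvent_solution_pos _ mu v m0 Lv mu_super); apply/andP; split; last exact: ltW.
  exact: (ge_inf (proj2 S_inf) (conj mu0 mu_super)).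
have [m_gt0 | m_le0] := ltrP 0 (inf S); last first.
  have m_eq : inf S = 0 by apply/eqP; rewrite eq_le m_le0 m0.
  by rewrite m_eq in Lv; exists v; split=> // p; rewrite Lv.
have [mu' /andP[mu'0 mu'm] mu'_super] := @pos_supersolution_shift _ v m_gt0 v0 Lv.
have := ge_inf (proj2 S_inf) (conj mu'0 mu'_super); lra.
Qed.

End Resolvent.
Arguments resolvent_op {R N}.
Arguments pos_supersolution {R N}.
Arguments resolvent_opE {R N a M}.
Arguments resolvent_min_principle {R N a M} M_ge0 {mu v x}.
Arguments exists_pos_supersolution {R N a M}.

Lemma hurwitz_resolvent_solvable {R : realType} {N : nat} {a : 'I_N -> R}
    {M : 'M[R]_N} :
  hurwitz (sysmat a M) ->
  forall mu, 0 <= mu -> forall y, exists x, forall p, resolvent_op a M mu x p = y p.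
Proof.
move=> hB mu mu0 y; have [x Gx] := unitmx_solve y (hurwitz_shift_unitmx hB mu0).
by exists x => p; rewrite -resolvent_opE.
Qed.

(* The scaled impulse response  y = A L_0^{-1} e_i  is a nonnegative
   supersolution along the edges of the graph, with a unit excess at i, and
   robustness bounds it at i by  a_i gamma. *)
Lemma impulse_response {R : realType} {N : nat} {a : 'I_N -> R} {M : 'M[R]_N}
    {gamma : R} (i : 'I_N) :
  (forall p, 0 < a p) -> (forall p q, 0 <= M p q) ->
  gamma_robust a M gamma -> 0 <= gamma ->
  exists y : 'I_N -> R,
    [/\ forall p r, M p r / a r * y r <= y p,
        forall r, 1 + M i r / a r * y r <= y i,
        0 <= y i & y i <= a i * gamma].
Proof.
move=> a_gt0 M_ge0 robust g0.
have solvable := hurwitz_resolvent_solvable robust.1.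
have [v [v0 Lv0]] := exists_pos_supersolution M_ge0 a_gt0 solvable.
have [x Lx] := solvable 0 (lexx 0) (fun p => (p == i)%:R).
have x0 : forall p, 0 <= x p.
  by apply: (resolvent_min_principle M_ge0 v0 Lv0) => p; rewrite Lx ler0n.
have xi : x i <= gamma.
  have := @robust_static_bound R N a M gamma x 1 robust g0 _ i.
  rewrite mulr1 ger0_norm //; apply=> j.
  have -> : \sum_q sysmat a M j q * x q = - resolvent_op a M 0 x j.
    rewrite -resolvent_opE -sumrN; apply: eq_bigr => q _.
    by rewrite !mxE mul0rn sub0r mulNr opprK.
  by rewrite Lx normrN ger0_norm ?ler0n //; case: (j == i).
have step p r : (p == i)%:R + M p r * x r <= a p * x p.
  rewrite -(Lx p) /resolvent_op add0r.
  have : M p r * x r <= \sum_q M p q * x q.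
    by rewrite (bigD1 r) //= lerDl sumr_ge0 // => q _; rewrite mulr_ge0.
  lra.
exists (fun p => a p * x p); split=> [p r | r | |] /=.
- by rewrite mulrA mulfVK ?gt_eqF //; apply: le_trans (step p r); rewrite lerDr.
- by rewrite mulrA mulfVK ?gt_eqF //; have := step i r; rewrite eqxx.
- by rewrite mulr_ge0 // ltW.
- by rewrite ler_wpM2l // ltW.
Qed.

Lemma drop_zip (T1 T2 : Type) (n : nat) (s : seq T1) (t : seq T2) :
  drop n (zip s t) = zip (drop n s) (drop n t).
Proof.
elim: s t n => [|x s IH] [|y t] [|n] //=; rewrite ?IH //.
  by case: (drop n t).
by case: (drop n s).
Qed.

Lemma take_zip (T1 T2 : Type) (n : nat) (s : seq T1) (t : seq T2) :
  take n (zip s t) = zip (take n s) (take n t).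
Proof.
by elim: s t n => [|x s IH] [|y t] [|n] //=; rewrite ?IH.
Qed.

Lemma rot_zip (T1 T2 : Type) (n : nat) (s : seq T1) (t : seq T2) :
  size s = size t -> rot n (zip s t) = zip (rot n s) (rot n t).
Proof. by move=> st; rewrite /rot drop_zip take_zip zip_cat // !size_drop st. Qed.

Section CycleWeights.
Variables (R : realType) (N : nat) (a : 'I_N -> R) (M : 'M[R]_N).

Lemma cycle_weight_rot (k : nat) (c : seq 'I_N) :
  cycle_weight a M (rot k c) = cycle_weight a M c.
Proof.
rewrite /cycle_weight rot_rot -rot_zip ?size_rot //.
by apply: perm_big; rewrite perm_rot.
Qed.

Fixpoint walk_weight (p : 'I_N) (s : seq 'I_N) : R :=
  if s is q :: s' then M q p / a p * walk_weight q s' else 1.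

Lemma walk_weight_zip (p q : 'I_N) (s : seq 'I_N) :
  \prod_(e <- zip (p :: s) (rcons s q)) (M e.2 e.1 / a e.1) =
  walk_weight p (rcons s q).
Proof.
elim: s p => [|r s IH] p /=; first by rewrite big_cons big_nil.
by rewrite big_cons IH.
Qed.

Lemma cycle_weight_walk (i : 'I_N) (s : seq 'I_N) :
  cycle_weight a M (i :: s) = walk_weight i (rcons s i).
Proof. by rewrite /cycle_weight rot1_cons walk_weight_zip. Qed.

Lemma walk_weight_rcons (p q : 'I_N) (s : seq 'I_N) :
  walk_weight p (rcons s q) = walk_weight p s * (M q (last p s) / a (last p s)).
Proof.
by elim: s p => [|r s IH] p /=; rewrite ?mul1r ?mulr1 // IH mulrA.
Qed.

Hypothesis a_gt0 : forall p, 0 < a p.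
Hypothesis M_ge0 : forall p q, 0 <= M p q.

Lemma walk_weight_ge0 (p : 'I_N) (s : seq 'I_N) : 0 <= walk_weight p s.
Proof.
elim: s p => [|q s IH] p //=.
by rewrite mulr_ge0 // divr_ge0 // ltW.
Qed.

Lemma walk_weight_decay (y : 'I_N -> R) :
  (forall p r, M p r / a r * y r <= y p) ->
  forall s p, walk_weight p s * y p <= y (last p s).
Proof.
move=> step; elim=> [|q s IH] p /=; first by rewrite mul1r.
apply: le_trans (IH q).
have -> : M q p / a p * walk_weight q s * y p =
          walk_weight q s * (M q p / a p * y p) by ring.
by apply: ler_wpM2l; [exact: walk_weight_ge0 | exact: step].
Qed.

Theorem cycle_supersolution (y : 'I_N -> R) (i : 'I_N) (c : seq 'I_N) :
  (forall p r, M p r / a r * y r <= y p) ->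
  (forall r, 1 + M i r / a r * y r <= y i) ->
  i \in c -> 1 + cycle_weight a M c * y i <= y i.
Proof.
move=> step step_i /rot_to[k s c_rot].
rewrite -(cycle_weight_rot k) c_rot cycle_weight_walk walk_weight_rcons.
set l := last i s; have := step_i l.
have : 0 <= M i l / a l by rewrite divr_ge0 // ltW.
have := @walk_weight_decay y step s i; rewrite -/l.
set W := walk_weight i s; set w := M i l / a l; set yl := y l.
by nra.
Qed.

End CycleWeights.
Arguments cycle_supersolution {R N a M} a_gt0 M_ge0 {y i c}.

Theorem mainTheorem3 (R : realType) (N : nat) (a : 'I_N -> R) (M : 'M[R]_N)
    (gamma : R) :
  (forall i, 0 < a i) ->
  (forall i, M i i = 0) ->
  (forall i j, i != j -> 0 <= M i j) ->
  hurwitz (sysmat a M) ->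
  0 < gamma ->
  gamma_robust a M gamma ->
  forall c : seq 'I_N, is_cycle M c ->
    cycle_weight a M c < 1 /\
    (forall i, i \in c -> (1 - cycle_weight a M c)^-1 <= a i * gamma).
Proof.
move=> a_gt0 M_diag M_offdiag _ gamma_gt0 robust c c_cycle.
have M_ge0 p q : 0 <= M p q.
  by case: (eqVneq p q) => [->|pq]; rewrite ?M_diag ?M_offdiag.
have node_bound i : i \in c ->
    cycle_weight a M c < 1 /\ (1 - cycle_weight a M c)^-1 <= a i * gamma.
  move=> ic; have [y [step step_i y0 yi]] :=
    impulse_response i a_gt0 M_ge0 robust (ltW gamma_gt0).
  exact: geometric_bound y0 (cycle_supersolution a_gt0 M_ge0 step step_i ic) yi.
case/and3P: c_cycle; case: c node_bound => [|i0 c] // node_bound _ _ _.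
split; first exact: (node_bound i0 (mem_head _ _)).1.
by move=> i /node_bound[].
Qed.
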